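(* Let $\mathfrak g=\mathfrak{gl}(1|2)$ and let $\zeta\in\mathcal I$ be regular, i.e. $a:=\zeta(E_{23})\ne0$. For $\lambda=\lambda_1\varepsilon_1+\lambda_2\varepsilon_2+\lambda_3\varepsilon_3\in\mathfrak h^*$ put $b:=\chi^{\bar0}_\lambda(\Omega)$ and $c:=\chi^{\bar0}_\lambda(z)$. The following are equivalent: (1) $\lambda$ is atypical; (2) $b=4(c^2-c)$; (3) $\widetilde M(\lambda,\zeta)$ is not simple.
   Context: $\mathfrak{gl}(1|2)$ is the Lie superalgebra of $3\times3$ complex matrices with $\mathbb Z_2$-grading in which index $1$ is even and indices $2,3$ are odd, with the super commutator; $E_{ij}$ are matrix units. $\mathfrak g_{\bar0}=\mathfrak g_0=\operatorname{span}\{E_{11},E_{22},E_{23},E_{32},E_{33}\}$, $\mathfrak g_1=\operatorname{span}\{E_{12},E_{13}\}$, $\mathfrak g_{-1}=\operatorname{span}\{E_{21},E_{31}\}$. $\mathfrak h$ = diagonal matrices, $\{\varepsilon_i\}$ the dual basis to $\{E_{ii}\}$; $\mathfrak n$ (resp. $\mathfrak n^-$) = strictly upper (resp. lower) triangular matrices; $\mathfrak b=\mathfrak h\oplus\mathfrak n$. Positive even root $\varepsilon_2-\varepsilon_3$, positive odd roots $\varepsilon_1-\varepsilon_2,\varepsilon_1-\varepsilon_3$; $\rho=\tfrac12(\varepsilon_2-\varepsilon_3)-\tfrac12(2\varepsilon_1-\varepsilon_2-\varepsilon_3)=-\varepsilon_1+\varepsilon_2$. Invariant form: $(\varepsilon_1,\varepsilon_1)=1$,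 $(\varepsilon_2,\varepsilon_2)=(\varepsilon_3,\varepsilon_3)=-1$, $(\varepsilon_i,\varepsilon_j)=0$ for $i\ne j$. $\lambda$ is atypical if $(\lambda+\rho,\beta)=0$ for some odd root $\beta$ (equivalently $(\lambda_1+\lambda_2)(\lambda_1+\lambda_3-1)=0$), typical otherwise. $\mathcal I=\{\zeta\in\mathfrak n^*\mid\zeta(\mathfrak n_{\bar1})=0\}$ (here $\mathfrak n_{\bar0}=\mathbb CE_{23}$). Set $e=E_{23}$, $f=E_{32}$, $H_0=E_{22}-E_{33}$, $\Omega:=4fe+H_0^2+2H_0$, $z:=E_{11}+\tfrac12(E_{22}+E_{33})$ (both central in $U(\mathfrak g_0)$); $\chi^{\bar0}_\lambda$ is the central character of $U(\mathfrak g_0)$ of the $\mathfrak g_0$-Verma module of highest weight $\lambda$ (with respect to $\mathfrak b_{\bar0}=\mathfrak h+\mathbb CE_{23}$). For regular $\zeta$: $M(\lambda,\zeta):=U(\mathfrak g_0)/\operatorname{Ker}(\chi^{\bar0}_\lambda)U(\mathfrak g_0)\otimes_{U(\mathbb Ce)}\mathbb C_\zeta$ and $\widetilde M(\lambda,\zeta):=U(\mathfrak g)\otimes_{U(\mathfrak g_0\oplus\mathfrak g_1)}M(\lambda,\zeta)$ with $\mathfrak g_1$ acting by zero. *)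

(* Indices are 0-based: ordinal 0,1,2 of 'I_3 correspond to the paper's
   indices 1,2,3.  Index 0 is even, indices 1,2 are odd. *)
From HB Require Import structures.
From mathcomp Require Import all_boot all_order all_algebra.
Set Implicit Arguments.
Unset Strict Implicit.
Unset Printing Implicit Defensive.
Import Order.TTheory GRing.Theory Num.Theory.
Local Open Scope ring_scope.

Section GL12.
Variable C : numClosedFieldType.

Definition ipar (i : 'I_3) : bool := i != 0%N :> nat.
Definition epar (i j : 'I_3) : bool := ipar i (+) ipar j.
Definition ssign (i j k l : 'I_3) : C :=
  if epar i j && epar k l then -1 else 1.

(* A representation of gl(1|2) (equivalently a U(gl(1|2))-module) on V:
   rho i j is the action of the matrix unit E_ij, and the super bracket
   [E_ij, E_kl] = d_jk E_il - (-1)^{|E_ij||E_kl|} d_li E_kj is respected. *)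
Definition is_rep (V : lmodType C) (rho : 'I_3 -> 'I_3 -> {linear V -> V}) :=
  forall (i j k l : 'I_3) (x : V),
    rho i j (rho k l x) - ssign i j k l *: rho k l (rho i j x)
    = (if j == k then rho i l x else 0)
      - ssign i j k l *: (if l == i then rho k j x else 0).

Definition i0 : 'I_3 := @Ordinal 3 0 isT.
Definition i1 : 'I_3 := @Ordinal 3 1 isT.
Definition i2 : 'I_3 := @Ordinal 3 2 isT.

(* e = E_23, f = E_32, H0 = E_22 - E_33, Omega = 4fe + H0^2 + 2H0,
   z = E_11 + 1/2 (E_22 + E_33), acting through rho *)
Definition act_e (V : lmodType C) (rho : 'I_3 -> 'I_3 -> {linear V -> V}) (x : V) := rho i1 i2 x.
Definition act_f (V : lmodType C) (rho : 'I_3 -> 'I_3 -> {linear V -> V}) (x : V) := rho i2 i1 x.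
Definition act_H0 (V : lmodType C) (rho : 'I_3 -> 'I_3 -> {linear V -> V}) (x : V) :=
  rho i1 i1 x - rho i2 i2 x.
Definition act_Omega (V : lmodType C) (rho : 'I_3 -> 'I_3 -> {linear V -> V}) (x : V) :=
  4%:R *: act_f rho (act_e rho x) + act_H0 rho (act_H0 rho x)
  + 2%:R *: act_H0 rho x.
Definition act_z (V : lmodType C) (rho : 'I_3 -> 'I_3 -> {linear V -> V}) (x : V) :=
  rho i0 i0 x + 2%:R^-1 *: (rho i1 i1 x + rho i2 i2 x).

Definition weight := 'I_3 -> C.

Definition wform (mu nu : weight) : C :=
  mu i0 * nu i0 - mu i1 * nu i1 - mu i2 * nu i2.
Definition eps (i : 'I_3) : weight := fun k => if k == i then 1 else 0.
Definition wadd (mu nu : weight) : weight := fun k => mu k + nu k.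
Definition wsub (mu nu : weight) : weight := fun k => mu k - nu k.
Definition rho_w : weight := wsub (eps i1) (eps i0).
Definition odd_root (beta : weight) : Prop :=
  exists i j : 'I_3, ipar i != ipar j /\ beta = wsub (eps i) (eps j).
Definition atypical (lam : weight) : Prop :=
  exists beta, odd_root beta /\ wform (wadd lam rho_w) beta = 0.

(* Central character chi^0_lambda of the g_0-Verma module of highest weight
   lambda (w.r.t. b_0 = h + C E_23), evaluated on the central elements used.
   It is the scalar by which the element acts on the highest weight vector
   (see the lemmas chi0_*_spec below, which justify these values). *)
Definition chi0_E11 (lam : weight) : C := lam i0.
Definition chi0_E22E33 (lam : weight) : C := lam i1 + lam i2.
Definition chi0_Omega (lam : weight) : C :=
  (lam i1 - lam i2) ^+ 2 + 2%:R * (lam i1 - lam i2).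
Definition chi0_z (lam : weight) : C := lam i0 + 2%:R^-1 * (lam i1 + lam i2).

Definition hw_vector (V : lmodType C) (rho : 'I_3 -> 'I_3 -> {linear V -> V}) (lam : weight)
  (v : V) :=
  act_e rho v = 0 /\ forall k, rho k k v = lam k *: v.

Lemma chi0_Omega_spec (V : lmodType C) (rho : 'I_3 -> 'I_3 -> {linear V -> V}) lam v :
  hw_vector rho lam v -> act_Omega rho v = chi0_Omega lam *: v.
Proof.
move=> [he hk]; rewrite /act_Omega he /act_f linear0 scaler0 add0r.
have hH : act_H0 rho v = (lam i1 - lam i2) *: v.
  by rewrite /act_H0 !hk scalerBl.
have hH' : forall k : C, act_H0 rho (k *: v) = k *: act_H0 rho v.
  by move=> k; rewrite /act_H0 scalerBr !linearZ.
rewrite hH hH' hH scalerA scalerA -scalerDl /chi0_Omega.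
by rewrite expr2 (mulrC 2%:R).
Qed.

Lemma chi0_z_spec (V : lmodType C) (rho : 'I_3 -> 'I_3 -> {linear V -> V}) lam v :
  hw_vector rho lam v -> act_z rho v = chi0_z lam *: v.
Proof.
move=> [_ hk]; rewrite /act_z !hk -scalerDl scalerA -scalerDl.
by [].
Qed.

(* Relations satisfied by the generator 1 (x) 1 of
   Mtilde(lam,zeta) = U(g) (x)_{U(g_0 + g_1)} M(lam,zeta), where
   a = zeta(E_23): g_1 = span{E_12, E_13} acts by zero, e acts by a, and
   Ker chi^0_lam, generated by E_11 - chi(E_11), E_22+E_33 - chi(E_22+E_33),
   Omega - chi(Omega) (Z(U(g_0)) = C[E_11, E_22+E_33, Omega]), annihilates it. *)
Definition whittaker_rel (V : lmodType C) (rho : 'I_3 -> 'I_3 -> {linear V -> V})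
  (lam : weight) (a : C) (v : V) :=
  [/\ rho i0 i1 v = 0, rho i0 i2 v = 0, act_e rho v = a *: v,
      rho i0 i0 v = chi0_E11 lam *: v &
   [/\ 
rho i1 i1 v + rho i2 i2 v = chi0_E22E33 lam *: v
    & act_Omega rho v = chi0_Omega lam *: v]].

Definition submodule (V : lmodType C) (rho : 'I_3 -> 'I_3 -> {linear V -> V}) (S : V -> Prop) :=
  [/\ S 0, (forall x y, S x -> S y -> S (x + y)),
      (forall (k : C) x, S x -> S (k *: x))
    & (forall i j x, S x -> S (rho i j x))].

Definition simple_module (V : lmodType C) (rho : 'I_3 -> 'I_3 -> {linear V -> V}) :=
  (exists x : V, x != 0) /\
  forall S, submodule rho S -> (forall x, S x -> x = 0) \/ (forall x, S x).

(* (V, rho, v) is (a model of) Mtilde(lam, zeta): the gl(1|2)-module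
   U(g)/U(g)J freely generated by v subject to whittaker_rel, i.e. v generates
   V and every module with a vector satisfying the relations receives a
   module map sending v to the given vector. *)
Definition is_Mtilde (V : lmodType C) (rho : 'I_3 -> 'I_3 -> {linear V -> V})
  (lam : weight) (a : C) (v : V) :=
  [/\ is_rep rho, whittaker_rel rho lam a v,
      (forall S, submodule rho S -> S v -> forall x, S x)
    & forall (W : lmodType C) (sigma : 'I_3 -> 'I_3 -> {linear W -> W}) (w : W),
        is_rep sigma -> whittaker_rel sigma lam a w ->
        exists phi : {linear V -> W},
          phi v = w /\ forall i j x, phi (rho i j x) = sigma i j (phi x)].

End GL12.

(* Let v be the generator of Mtilde = Mtilde(lambda, zeta) and M = U(g_0) v.
   With H0 = E22 - E33, M is spanned by the vectors
   h_k = (H0 + 2(k-1)) ... (H0 + 2) H0 v, on which e - a acts as the weighted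
   shift h_(k+1) |-> -2a(k+1) h_k.  Since Mtilde = M + E21 M + E31 M + E21 E31 M,
   applying E21, E31 and then powers of e - a to any nonzero vector of a
   submodule produces E21 E31 v.  The element Q = E12 E13 E21 E31 commutes with
   H0 and e, hence acts on v by a scalar; an explicit realization of Mtilde on
   functions C -> C shows that this scalar is
   kappa = -(lambda_1 + lambda_2)(lambda_1 + lambda_3 - 1).
   If kappa <> 0, then Q E21 E31 v = kappa v and every nonzero submodule is
   everything.  If kappa = 0, then Q kills M, and
   E21 E31 M + E12 E21 E31 M + E13 E21 E31 M is a nonzero submodule, which is
   proper because E11 acts on it with eigenvalues lambda_1 - 2 and
   lambda_1 - 1 while E11 v = lambda_1 v.  Finally, kappa = 0 is atypicality,
   and b - 4(c^2 - c) = 4 kappa. *)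

From HB Require Import structures.
From mathcomp Require Import all_boot all_order all_algebra.
From mathcomp Require Import boolp functions ring.

Set Implicit Arguments.
Unset Strict Implicit.
Unset Printing Implicit Defensive.
Import GRing.Theory Num.Theory.
Local Open Scope ring_scope.

Lemma ord3P (i : 'I_3) : [\/ i = i0, i = i1 | i = i2].
Proof.
by case: i => [[|[|[|//]]] Hi]; [constructor 1|constructor 2|constructor 3];
  apply: val_inj.
Qed.

Lemma rho_cases i j :
  [\/ ipar i = ipar j, i = i0 /\ j != i0 | j = i0 /\ i != i0].
Proof. by case: (ord3P i) => ->; case: (ord3P j) => ->; constructor. Qed.

Section Subspace.
Variables (R : pzRingType) (V : lmodType R).

Definition subspace (P : V -> Prop) :=
  [/\ P 0, forall x y, P x -> P y -> P (x + y) & forall k x, P x -> P (k *: x)].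

Variable P : V -> Prop.
Hypothesis P_subspace : subspace P.

Lemma subspace0 : P 0. Proof. by case: P_subspace. Qed.

Lemma subspaceD x y : P x -> P y -> P (x + y).
Proof. by case: P_subspace => _ + _; apply. Qed.

Lemma subspaceZ k x : P x -> P (k *: x).
Proof. by case: P_subspace => _ _; apply. Qed.

Lemma subspaceN x : P x -> P (- x).
Proof. by rewrite -scaleN1r; apply: subspaceZ. Qed.

Lemma subspace_sum I (r : seq I) (Q : pred I) (F : I -> V) :
  (forall i, Q i -> P (F i)) -> P (\sum_(i <- r | Q i) F i).
Proof. by move=> PF; apply: big_ind => //; [apply: subspace0 | apply: subspaceD]. Qed.

End Subspace.

(* Syntactic matching: [apply: subspaceD] would also unfold [act_H0] or [hseq]
   to a sum. *)
Ltac in_subspace sub :=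
  repeat match goal with
  | |- _ (_ + _) => apply: (subspaceD sub)
  | |- _ (- _) => apply: (subspaceN sub)
  | |- _ (_ *: _) => apply: (subspaceZ sub)
  | |- _ 0 => apply: (subspace0 sub)
  end.

Lemma submodule_subspace (C : numClosedFieldType) (V : lmodType C)
  (rho : 'I_3 -> 'I_3 -> {linear V -> V}) S :
  submodule rho S -> subspace S.
Proof. by case. Qed.

Lemma iter_linear (R : pzRingType) (V : lmodType R) (f : {linear V -> V}) n :
  linear (iter n f).
Proof. by move=> k x y; elim: n => //= n ->; rewrite linearP. Qed.

HB.instance Definition _ (R : pzRingType) (V : lmodType R) (f : {linear V -> V}) n :=
  GRing.isLinear.Build R V V *:%R (iter n f) (iter_linear f n).

Lemma selfN_eq0 (R : numFieldType) (V : lmodType R) (u : V) :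
  u = - u -> u = 0.
Proof.
move=> uN; have /eqP : 2%:R *: u = 0 by rewrite scaler_nat mulr2n {2}uN subrr.
by rewrite scaler_eq0 pnatr_eq0 => /eqP.
Qed.

Lemma act_H0_linear (C : numClosedFieldType) (V : lmodType C)
  (rho : 'I_3 -> 'I_3 -> {linear V -> V}) : linear (act_H0 rho).
Proof.
move=> k x y; rewrite /act_H0 (linearP (rho i1 i1)) (linearP (rho i2 i2)).
by rewrite scalerBr opprD addrACA.
Qed.

HB.instance Definition _ (C : numClosedFieldType) (V : lmodType C)
  (rho : 'I_3 -> 'I_3 -> {linear V -> V}) :=
  GRing.isLinear.Build C V V *:%R (act_H0 rho) (act_H0_linear rho).

Arguments act_H0 : simpl never.

Definition lower (C : numClosedFieldType) (V : lmodType C)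
  (rho : 'I_3 -> 'I_3 -> {linear V -> V}) (a : C) (x : V) : V :=
  act_e rho x - a *: x.

Lemma lower_linear (C : numClosedFieldType) (V : lmodType C)
  (rho : 'I_3 -> 'I_3 -> {linear V -> V}) (a : C) : linear (lower rho a).
Proof.
move=> k x y; rewrite /lower /act_e linearP scalerBr scalerDr !scalerA mulrC.
by rewrite addrACA opprD.
Qed.

HB.instance Definition _ (C : numClosedFieldType) (V : lmodType C)
  (rho : 'I_3 -> 'I_3 -> {linear V -> V}) (a : C) :=
  GRing.isLinear.Build C V V *:%R (lower rho a) (lower_linear rho a).

Lemma eigenvector_sum_eq0 (R : fieldType) (V : lmodType R) (f : {linear V -> V})
  (al be ga : R) (x y : V) :
  al != ga -> be != ga -> al != be ->
  f x = al *: x -> f y = be *: y -> f (x + y) = ga *: (x + y) -> x + y = 0.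
Proof.
move=> alga bega albe fx fy fxy.
have E : (al - ga) *: x + (be - ga) *: y = 0.
  by rewrite !scalerBl addrACA -opprD -scalerDr -fxy linearD fx fy subrr.
have : ((al - ga) * (al - be)) *: x = 0.
  have E1 := congr1 f E; have E2 := congr1 ( *:%R be) E.
  rewrite linear0 linearD !linearZZ fx fy !scalerA in E1.
  rewrite /= scaler0 scalerDr !scalerA in E2.
  rewrite mulrBr [_ * be]mulrC scalerBl; apply/eqP; rewrite subr_eq0; apply/eqP.
  move/eqP: E1; rewrite addr_eq0 => /eqP ->.
  by move/eqP: E2; rewrite addr_eq0 => /eqP ->; rewrite mulrC.
move/eqP; rewrite scaler_eq0 mulf_eq0 !subr_eq0 (negbTE alga) (negbTE albe) /= => /eqP x0.
move: E; rewrite x0 scaler0 add0r => /eqP; rewrite scaler_eq0 subr_eq0 (negbTE bega) /=.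
by move/eqP ->; rewrite addr0.
Qed.

Section Representation.
Variables (C : numClosedFieldType) (V : lmodType C).
Variable rho : 'I_3 -> 'I_3 -> {linear V -> V}.
Hypothesis rho_rep : is_rep rho.

Local Notation H0 := (act_H0 rho).
Local Notation e := (rho i1 i2).
Local Notation E11 := (rho i0 i0).
Local Notation E21 := (rho i1 i0).
Local Notation E31 := (rho i2 i0).
Local Notation E12 := (rho i0 i1).
Local Notation E13 := (rho i0 i2).

Lemma rho_comm i j k l x :
  rho i j (rho k l x) = ssign C i j k l *: rho k l (rho i j x)
    + ((if j == k then rho i l x else 0)
       - ssign C i j k l *: (if l == i then rho k j x else 0)).
Proof. by rewrite -rho_rep addrC subrK. Qed.

Ltac simpl_ssign :=
  rewrite /ssign /epar /ipar /=;
  rewrite ?(scaler0, scale1r, scaleN1r, subr0, addr0, sub0r, add0r, opprK,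
            oppr0, linear0).

Lemma rho_anticomm i j k l x : epar i j -> epar k l -> j != k -> l != i ->
  rho i j (rho k l x) = - rho k l (rho i j x).
Proof.
move=> pij pkl jk li; rewrite rho_comm /ssign pij pkl (negbTE jk) (negbTE li).
by rewrite scaleN1r scaler0 subr0 addr0.
Qed.

Lemma odd_sq i j x : epar i j -> i != j -> rho i j (rho i j x) = 0.
Proof. by move=> pij ij; apply: selfN_eq0; apply: rho_anticomm; rewrite // eq_sym. Qed.

Lemma E21_sq x : E21 (E21 x) = 0. Proof. exact: odd_sq. Qed.
Lemma E31_sq x : E31 (E31 x) = 0. Proof. exact: odd_sq. Qed.
Lemma E12_sq x : E12 (E12 x) = 0. Proof. exact: odd_sq. Qed.
Lemma E13_sq x : E13 (E13 x) = 0. Proof. exact: odd_sq. Qed.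
Lemma E31E21 x : E31 (E21 x) = - E21 (E31 x). Proof. exact: rho_anticomm. Qed.
Lemma E13E12 x : E13 (E12 x) = - E12 (E13 x). Proof. exact: rho_anticomm. Qed.

Ltac push_gm1 :=
  rewrite ?(linearD, linearN, linear0, E21_sq, E31_sq, E31E21, oppr0, opprK,
            addr0, add0r).

Definition H0_weight (i j : 'I_3) : C :=
  (j == i1)%:R - (i == i1)%:R - (j == i2)%:R + (i == i2)%:R.

Lemma rho_H0 i j y : rho i j (H0 y) = H0 (rho i j y) + H0_weight i j *: rho i j y.
Proof.
have F k : (if j == k then rho i k y else 0) = (j == k)%:R *: rho i j y.
  by case: eqP => [->|_]; rewrite ?scale1r ?scale0r.
have G k : (if k == i then rho k j y else 0) = (i == k)%:R *: rho i j y.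
  by rewrite eq_sym; case: eqP => [->|_]; rewrite ?scale1r ?scale0r.
rewrite /act_H0 linearB (rho_comm i j i1 i1) (rho_comm i j i2 i2).
rewrite /ssign /epar /ipar /= !andbF !F !G !scale1r.
rewrite opprD addrACA -!scalerBl; congr (_ + _ *: _).
by rewrite /H0_weight; ring.
Qed.

Definition Qop : {linear V -> V} := E12 \o E13 \o E21 \o E31.

Lemma Qop_H0 y : Qop (H0 y) = H0 (Qop y).
Proof.
rewrite /Qop /= !(rho_H0, linearD, linearZ) /H0_weight /=.
set q := E12 _; move: (H0 q) => h.
by rewrite -!addrA -!scalerDl [X in X *: q](_ : _ = 0) ?scale0r ?addr0 //; ring.
Qed.

Lemma Qop_e y : Qop (e y) = e (Qop y).
Proof.
rewrite /Qop /= (rho_comm i1 i2 i0 i1) (rho_comm i1 i2 i0 i2) (rho_comm i1 i2 i1 i0).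
rewrite (rho_comm i1 i2 i2 i0) /ssign /epar /ipar /=.
by rewrite !(scale1r, scaler0, subr0, sub0r, addr0, E13_sq, E21_sq, oppr0,
             linear0, linearD).
Qed.

Section WhittakerVector.
Variables (a : C) (v : V).
Hypothesis a_neq0 : a != 0.
Hypothesis e_v : e v = a *: v.

Local Notation lower := (lower rho a).

Fixpoint hseq k : V :=
  if k is k'.+1 then H0 (hseq k') + (2 * k')%:R *: hseq k' else v.

Arguments hseq : simpl never.

Lemma hseqS k : hseq k.+1 = H0 (hseq k) + (2 * k)%:R *: hseq k.
Proof. by []. Qed.

Lemma H0_hseq k : H0 (hseq k) = hseq k.+1 - (2 * k)%:R *: hseq k.
Proof. by rewrite hseqS addrK. Qed.

Definition span0 (x : V) := exists n (c : nat -> C), x = \sum_(k < n) c k *: hseq k.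

Lemma span0_subspace : subspace span0.
Proof.
have widen n m (c : nat -> C) : (n <= m)%N -> \sum_(k < n) c k *: hseq k =
    \sum_(k < m) (if (k < n)%N then c k else 0) *: hseq k.
  move=> nm; rewrite (big_ord_widen _ (fun k => c k *: hseq k) nm) big_mkcond.
  by apply: eq_bigr => k _; case: ifP; rewrite ?scale0r.
split.
- by exists 0%N, (fun=> 0); rewrite big_ord0.
- move=> _ _ [n [c ->]] [m [d ->]].
  exists (maxn n m),
    (fun k => (if (k < n)%N then c k else 0) + if (k < m)%N then d k else 0).
  rewrite (widen n (maxn n m)) ?leq_maxl // (widen m (maxn n m)) ?leq_maxr //.
  by rewrite -big_split; apply: eq_bigr => k _; rewrite scalerDl.
- move=> k _ [n [c ->]]; exists n, (fun i => k * c i).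
  by rewrite scaler_sumr; apply: eq_bigr => i _; rewrite scalerA.
Qed.

Lemma span0_hseq k : span0 (hseq k).
Proof.
exists k.+1, (fun i => (i == k)%:R); rewrite big_ord_recr /= eqxx scale1r big1 ?add0r //.
by move=> i _; rewrite (ltn_eqF (ltn_ord i)) scale0r.
Qed.

Lemma span0_v : span0 v. Proof. exact: (span0_hseq 0). Qed.

Lemma span0_linear_image (f : {linear V -> V}) :
  (forall k, span0 (f (hseq k))) -> forall x, span0 x -> span0 (f x).
Proof.
move=> fh _ [n [c ->]]; rewrite linear_sum; apply: (subspace_sum span0_subspace) => k _.
by rewrite linearZZ; apply: (subspaceZ span0_subspace).
Qed.

Lemma span0_H0 x : span0 x -> span0 (H0 x).
Proof.
apply: span0_linear_image => k /=.
rewrite H0_hseq.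
by in_subspace span0_subspace; apply: span0_hseq.
Qed.

Lemma span0_stable (f : {linear V -> V}) d :
  (forall y, f (H0 y) = H0 (f y) + d *: f y) -> span0 (f v) ->
  forall x, span0 x -> span0 (f x).
Proof.
move=> fH0 fv; have fh k : span0 (f (hseq k)).
  elim: k => [|k IH]; first exact: fv.
  rewrite hseqS linearD linearZZ fH0.
  by in_subspace span0_subspace; [apply: span0_H0 | |].
exact: span0_linear_image.
Qed.

Lemma span0_eigen (f : {linear V -> V}) d c :
  (forall y, f (H0 y) = H0 (f y) + d *: f y) -> f v = c *: v -> d * c = 0 ->
  forall x, span0 x -> f x = c *: x.
Proof.
move=> fH0 fv dc0; have fh k : f (hseq k) = c *: hseq k.
  elim: k => [|k IH]; first exact: fv.
  rewrite hseqS linearD linearZZ fH0 IH [H0 _]linearZZ /= !scalerA dc0 scale0r addr0.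
  by rewrite [RHS]scalerDr scalerA [_ * c]mulrC.
move=> _ [n [c' ->]]; rewrite linear_sum scaler_sumr; apply: eq_bigr => k _.
by rewrite [f _]linearZZ fh !scalerA mulrC.
Qed.

Lemma lower_v : lower v = 0.
Proof. by rewrite /lower /act_e e_v subrr. Qed.

Lemma lower_H0 y : lower (H0 y) = H0 (lower y) - 2%:R *: lower y - (2%:R * a) *: y.
Proof.
rewrite /lower /act_e rho_H0 [H0 (_ - _)]linearB /= [H0 (_ *: _)]linearZZ /=.
rewrite [2%:R *: _]scalerBr [2%:R *: (_ *: _)]scalerA -[in RHS]addrA -opprD subrK addrAC.
by congr (_ + _); rewrite -scaleNr; congr (_ *: _); rewrite /H0_weight /=; ring.
Qed.

Lemma lower_hseq k : lower (hseq k.+1) = (- (2%:R * a * k.+1%:R)) *: hseq k.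
Proof.
elim: k => [|k IH].
  rewrite hseqS muln0 scale0r addr0 lower_H0 lower_v scaler0 linear0 subr0 sub0r.
  by rewrite -scaleNr; congr (_ *: _); ring.
set c := - (2%:R * a * k.+1%:R).
have lower_top : c *: H0 (hseq k) - 2%:R *: (c *: hseq k)
    + (2 * k.+1)%:R *: (c *: hseq k) = c *: hseq k.+1.
  rewrite hseqS [in RHS]scalerDr !scalerA -addrA; congr (_ + _).
  by rewrite -scaleNr -scalerDl; congr (_ *: _); ring.
rewrite hseqS linearD linearZZ /= lower_H0 IH [H0 _]linearZZ /= addrAC lower_top.
by rewrite -scalerBl; congr (_ *: _); rewrite /c; ring.
Qed.

Lemma iter_lower_hseq k :
  iter k lower (hseq k) = ((- (2%:R * a)) ^+ k * k`!%:R) *: v.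
Proof.
elim: k => [|k IH]; first by rewrite expr0 mul1r scale1r.
rewrite iterSr lower_hseq linearZZ /= IH scalerA; congr (_ *: _).
by rewrite exprS factS natrM; ring.
Qed.

Lemma iter_lower_hseq_gt k m : (k < m)%N -> iter m lower (hseq k) = 0.
Proof.
elim: k m => [|k IH] [|m] // km; rewrite iterSr.
  by rewrite lower_v linear0.
by rewrite lower_hseq linearZZ /= IH ?scaler0.
Qed.

Lemma span0_lower x : span0 x -> x != 0 ->
  exists m c, c != 0 /\ iter m lower x = c *: v.
Proof.
move=> [n [c ->]]; elim: n => [|n IH]; first by rewrite big_ord0 eqxx.
rewrite big_ord_recr /=; have [->|cn0] := eqVneq (c n) 0; first by rewrite scale0r addr0.
move=> _; exists n, (c n * ((- (2%:R * a)) ^+ n * n`!%:R)); split.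
  by rewrite !mulf_neq0 ?expf_neq0 ?oppr_eq0 ?mulf_neq0 ?pnatr_eq0 -?lt0n ?fact_gt0.
rewrite linearD linear_sum big1 => [|k _].
  by rewrite add0r linearZZ /= iter_lower_hseq scalerA.
by rewrite linearZZ /= iter_lower_hseq_gt ?scaler0.
Qed.

Lemma lower_E21E31 z : lower (E21 (E31 z)) = E21 (E31 (lower z)).
Proof.
rewrite /lower /act_e (rho_comm i1 i2 i1 i0) (rho_comm i1 i2 i2 i0) /ssign /epar /ipar /=.
by rewrite !(scale1r, scaler0, subr0, addr0) linearD E21_sq addr0 !linearB !linearZZ.
Qed.

Lemma iter_lower_E21E31 n z : iter n lower (E21 (E31 z)) = E21 (E31 (iter n lower z)).
Proof. by elim: n => //= n ->; rewrite lower_E21E31. Qed.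

Lemma submodule_lower S x : submodule rho S -> S x -> S (lower x).
Proof.
move=> [_ SD SZ Srho] Sx; apply: SD; first exact: Srho.
by rewrite -scaleNr; apply: SZ.
Qed.

Lemma submodule_iter_lower S n x : submodule rho S -> S x -> S (iter n lower x).
Proof.
by move=> Ssub; elim: n => //= n IH Sx; apply: submodule_lower => //; apply: IH.
Qed.

Lemma submodule_E21E31v S t : submodule rho S -> span0 t -> t != 0 ->
  S (E21 (E31 t)) -> S (E21 (E31 v)).
Proof.
move=> Ssub t_span0 t_neq0 St.
have [m [c [c_neq0 lower_t]]] := span0_lower t_span0 t_neq0.
have := submodule_iter_lower m Ssub St; rewrite iter_lower_E21E31 lower_t !linearZZ.
move=> /(subspaceZ (submodule_subspace Ssub) c^-1).
by rewrite scalerA mulVf ?scale1r.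
Qed.

Variable lam : weight C.
Hypothesis whv : whittaker_rel rho lam a v.

Let E12_v : E12 v = 0. Proof. by case: whv. Qed.
Let E13_v : E13 v = 0. Proof. by case: whv. Qed.
Let E11_v : E11 v = lam i0 *: v. Proof. by case: whv. Qed.
Let E22E33_v : rho i1 i1 v + rho i2 i2 v = chi0_E22E33 lam *: v.
Proof. by case: whv => _ _ _ _ []. Qed.
Let Omega_v : act_Omega rho v = chi0_Omega lam *: v.
Proof. by case: whv => _ _ _ _ []. Qed.

Lemma span0_rho_v i j : ipar i = ipar j -> span0 (rho i j v).
Proof.
have E22_v : rho i1 i1 v = 2%:R^-1 *: (chi0_E22E33 lam *: v + H0 v).
  rewrite -E22E33_v /act_H0 addrACA subrr addr0 -mulr2n -scaler_nat scalerA.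
  by rewrite mulVf ?scale1r // pnatr_eq0.
have E33_v : rho i2 i2 v = chi0_E22E33 lam *: v - rho i1 i1 v.
  by rewrite -E22E33_v [_ + rho i2 i2 v]addrC addrK.
have f_v : rho i2 i1 v =
    (4%:R * a)^-1 *: (chi0_Omega lam *: v - (H0 (H0 v) + 2%:R *: H0 v)).
  rewrite -Omega_v /act_Omega /act_f /act_e e_v linearZZ -[X in X - _]addrA addrK.
  by rewrite !scalerA mulVf ?scale1r // mulf_neq0 ?pnatr_eq0.
by case: (ord3P i) => ->; case: (ord3P j) => -> // _;
  rewrite ?E11_v ?E33_v ?E22_v ?e_v ?f_v; in_subspace span0_subspace;
  repeat apply: span0_H0; exact: span0_v.
Qed.

Lemma g0_span0 i j x : ipar i = ipar j -> span0 x -> span0 (rho i j x).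
Proof. by move=> pij; apply: (span0_stable (rho_H0 i j)); apply: span0_rho_v. Qed.

Lemma g1_span0 p x : p != i0 -> span0 x -> rho i0 p x = 0.
Proof.
move=> p0 x_span0; rewrite (span0_eigen (rho_H0 i0 p) _ (mulr0 _) x_span0) ?scale0r //.
by case: (ord3P p) p0 => -> // _.
Qed.

Lemma E11_span0 x : span0 x -> E11 x = lam i0 *: x.
Proof. by apply: (span0_eigen (rho_H0 i0 i0) E11_v); rewrite /H0_weight /=; ring. Qed.

Definition span1 x := exists t1 t2, [/\ span0 t1, span0 t2 & x = E21 t1 + E31 t2].
Definition span2 x := exists2 t, span0 t & x = E21 (E31 t).

Lemma span1_subspace : subspace span1.
Proof.
split.
- by exists 0, 0; rewrite !linear0 addr0; split=> //; apply: (subspace0 span0_subspace).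
- move=> _ _ [t1 [t2 [s1 s2 ->]]] [u1 [u2 [r1 r2 ->]]]; exists (t1 + u1), (t2 + u2).
  by rewrite !linearD addrACA; split=> //; apply: (subspaceD span0_subspace).
- move=> k _ [t1 [t2 [s1 s2 ->]]]; exists (k *: t1), (k *: t2).
  by rewrite !linearZZ scalerDr; split=> //; apply: (subspaceZ span0_subspace).
Qed.

Lemma span2_subspace : subspace span2.
Proof.
split.
- by exists 0; rewrite ?linear0 //; apply: (subspace0 span0_subspace).
- move=> _ _ [t s ->] [u r ->]; exists (t + u); rewrite ?linearD //.
  exact: (subspaceD span0_subspace).
- move=> k _ [t s ->]; exists (k *: t); rewrite ?linearZZ //.
  exact: (subspaceZ span0_subspace).
Qed.

Lemma gm1_span0 p t : p != i0 -> span0 t -> span1 (rho p i0 t).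
Proof.
move=> p0 t_span0; have s0 := subspace0 span0_subspace.
case: (ord3P p) p0 => -> // _; [exists t, 0 | exists 0, t];
  by rewrite linear0 ?addr0 ?add0r.
Qed.

Lemma gm1_span1 p x : p != i0 -> span1 x -> span2 (rho p i0 x).
Proof.
move=> p0 [t1 [t2 [s1 s2 ->]]]; rewrite linearD.
case: (ord3P p) p0 => -> // _.
  by rewrite E21_sq add0r; exists t2.
rewrite E31_sq addr0 E31E21 -!linearN; exists (- t1) => //.
exact: (subspaceN span0_subspace).
Qed.

Lemma gm1_span2 p x : p != i0 -> span2 x -> rho p i0 x = 0.
Proof.
move=> p0 [t _ ->]; case: (ord3P p) p0 => -> // _; first by rewrite E21_sq.
by rewrite E31E21 E31_sq !linear0 ?oppr0.
Qed.

Lemma g1_span1 p x : p != i0 -> span1 x -> span0 (rho i0 p x).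
Proof.
move=> p0 [t1 [t2 [s1 s2 ->]]]; have g1t1 := g1_span0 p0 s1; have g1t2 := g1_span0 p0 s2.
rewrite linearD; case: (ord3P p) p0 g1t1 g1t2 => -> // _ g1t1 g1t2;
  rewrite (rho_comm i0 _ i1 i0) (rho_comm i0 _ i2 i0) g1t1 g1t2; simpl_ssign;
  in_subspace span0_subspace; by apply: g0_span0.
Qed.

Lemma g0_span1 i j x : ipar i = ipar j -> span1 x -> span1 (rho i j x).
Proof.
move=> pij [t1 [t2 [s1 s2 ->]]].
rewrite linearD (rho_comm i j i1 i0) (rho_comm i j i2 i0).
case: (ord3P i) pij => ->; case: (ord3P j) => -> // _; simpl_ssign;
  in_subspace span1_subspace; by apply: gm1_span0 => //; apply: g0_span0.
Qed.

Lemma g0_span2 i j x : ipar i = ipar j -> span2 x -> span2 (rho i j x).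
Proof.
move=> pij [t s ->]; have E31t : span1 (E31 t) by apply: gm1_span0.
rewrite (rho_comm i j i1 i0).
case: (ord3P i) pij => ->; case: (ord3P j) => -> // _; simpl_ssign;
  in_subspace span2_subspace; by apply: gm1_span1 => //; apply: g0_span1.
Qed.

Lemma g1_span2 p x : p != i0 -> span2 x -> span1 (rho i0 p x).
Proof.
move=> p0 [t s ->]; have E31t : span1 (E31 t) by apply: gm1_span0.
have g1E31t := g1_span1 p0 E31t; rewrite (rho_comm i0 p i1 i0).
case: (ord3P p) p0 g1E31t => -> // _ g1E31t; simpl_ssign; in_subspace span1_subspace;
  first [by apply: gm1_span0 | by apply: g0_span1].
Qed.

Definition pbw_span x :=
  exists x0 x1 x2, [/\ span0 x0, span1 x1, span2 x2 & x = x0 + x1 + x2].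

Lemma pbw_span_submodule : submodule rho pbw_span.
Proof.
have [s00 s0D s0Z] := span0_subspace; have [s10 s1D s1Z] := span1_subspace.
have [s20 s2D s2Z] := span2_subspace.
split.
- by exists 0, 0, 0; rewrite !addr0.
- move=> _ _ [x0 [x1 [x2 [s0 s1 s2 ->]]]] [y0 [y1 [y2 [r0 r1 r2 ->]]]].
  exists (x0 + y0), (x1 + y1), (x2 + y2).
  split; try by [apply: s0D | apply: s1D | apply: s2D].
  by rewrite addrACA [x0 + x1 + _]addrACA.
- move=> k _ [x0 [x1 [x2 [s0 s1 s2 ->]]]]; exists (k *: x0), (k *: x1), (k *: x2).
  by rewrite !scalerDr; split; [apply: s0Z | apply: s1Z | apply: s2Z |].
move=> i j _ [x0 [x1 [x2 [s0 s1 s2 ->]]]]; rewrite !linearD.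
have [pij | [-> p0] | [-> p0]] := rho_cases i j.
- exists (rho i j x0), (rho i j x1), (rho i j x2).
  by split; [apply: g0_span0 | apply: g0_span1 | apply: g0_span2 |].
- exists (rho i0 j x1), (rho i0 j x2), 0; rewrite (g1_span0 p0 s0) add0r addr0.
  by split; [apply: g1_span1 | apply: g1_span2 | |].
- exists 0, (rho i i0 x0), (rho i i0 x1); rewrite (gm1_span2 p0 s2) addr0 add0r.
  by split; [| apply: gm1_span0 | apply: gm1_span1 |].
Qed.

Lemma pbw_decomposition :
  (forall S, submodule rho S -> S v -> forall x, S x) -> forall x, pbw_span x.
Proof.
move=> gen; apply: gen pbw_span_submodule _; exists v, 0, 0; rewrite !addr0.
have [s10 _ _] := span1_subspace; have [s20 _ _] := span2_subspace.
by split=> //; exact: span0_v.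
Qed.

Lemma Qop_v_scalar : exists c, Qop v = c *: v.
Proof.
have Qv_span0 : span0 (Qop v).
  apply: g1_span1 => //; apply: g1_span2 => //.
  by apply: gm1_span1 => //; apply: gm1_span0 => //; exact: span0_v.
have lower_Qv : lower (Qop v) = 0 by rewrite /lower /act_e -Qop_e e_v linearZZ subrr.
have [->|Qv_neq0] := eqVneq (Qop v) 0; first by exists 0; rewrite scale0r.
have [[|m] [c [c_neq0 lower_c]]] := span0_lower Qv_span0 Qv_neq0; first by exists c.
suff v0 : v = 0 by exists 0; rewrite v0 linear0 scaler0.
move/eqP: lower_c; rewrite iterSr lower_Qv linear0 eq_sym scaler_eq0 (negbTE c_neq0).
by move/eqP.
Qed.

Lemma span0_Qop c : Qop v = c *: v -> forall x, span0 x -> Qop x = c *: x.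
Proof.
move=> Qv; apply: (span0_eigen (d := 0)) Qv (mul0r _) => y.
by rewrite Qop_H0 scale0r addr0.
Qed.

Lemma submodule_E21E31_span0 S x : submodule rho S -> S x -> x != 0 -> pbw_span x ->
  exists t, [/\ span0 t, t != 0 & S (E21 (E31 t))].
Proof.
move=> Ssub Sx x_neq0 [x0 [x1 [x2 [s0 [t1 [t2 [s1 s2 ->]]] [t3 s3 ->] Ex]]]].
have [_ _ _ Srho] := Ssub.
have [x00|] := eqVneq x0 0; last first.
  move=> x0_neq0; exists x0; split=> //; move: (Srho i1 i0 _ (Srho i2 i0 _ Sx)).
  by rewrite Ex; push_gm1.
have [t20|] := eqVneq t2 0; last first.
  move=> t2_neq0; exists t2; split=> //; move: (Srho i1 i0 _ Sx).
  by rewrite Ex x00; push_gm1.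
have [t10|] := eqVneq t1 0; last first.
  move=> t1_neq0; exists t1; split=> //.
  move: (subspaceN (submodule_subspace Ssub) (Srho i2 i0 _ Sx)).
  by rewrite Ex x00 t20; push_gm1.
have x_eq : x = E21 (E31 t3) by rewrite Ex x00 t10 t20 !linear0 !add0r.
exists t3; split; rewrite -?x_eq //.
by apply: contraNneq x_neq0 => t30; rewrite x_eq t30 !linear0.
Qed.

Lemma simple_of_Qop_v c :
  (forall S, submodule rho S -> S v -> forall x, S x) ->
  v != 0 -> Qop v = c *: v -> c != 0 -> simple_module rho.
Proof.
move=> gen v_neq0 Qv c_neq0; split; first by exists v.
move=> S Ssub; have [|] := EM (forall x, S x -> x = 0); first by left.
move=> /existsNP[x /not_implyP[Sx /eqP x_neq0]].
right; have [_ _ SZ Srho] := Ssub.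
have [t [t_span0 t_neq0 St]] :=
  submodule_E21E31_span0 Ssub Sx x_neq0 (pbw_decomposition gen x).
have := Srho i0 i1 _ (Srho i0 i2 _ (submodule_E21E31v Ssub t_span0 t_neq0 St)).
rewrite -[E12 _]/(Qop v) Qv => /(SZ c^-1).
by rewrite scalerA mulVf // scale1r; apply: gen.
Qed.

Lemma E11_gm1 p x : p != i0 -> E11 (rho p i0 x) = rho p i0 (E11 x) - rho p i0 x.
Proof.
move=> p0; rewrite (rho_comm i0 i0 p i0) /ssign /epar addbb /= eq_sym (negbTE p0).
by rewrite ?eqxx !scale1r sub0r.
Qed.

Lemma E11_g1 p x : p != i0 -> E11 (rho i0 p x) = rho i0 p (E11 x) + rho i0 p x.
Proof.
move=> p0; rewrite (rho_comm i0 i0 i0 p) /ssign /epar addbb /= (negbTE p0).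
by rewrite ?eqxx !scale1r subr0.
Qed.

Lemma E11_span2 z : span2 z -> E11 z = (lam i0 - 2%:R) *: z.
Proof.
move=> [t t_span0 ->]; rewrite E11_gm1 // E11_gm1 // E11_span0 // linearB !linearZZ /=.
by rewrite scalerBl scaler_nat mulr2n opprD addrA.
Qed.

Lemma E11_g1_span2 p z : p != i0 -> span2 z ->
  E11 (rho i0 p z) = (lam i0 - 1) *: rho i0 p z.
Proof.
move=> p0 z_span2; rewrite E11_g1 // E11_span2 // linearZZ /=.
by rewrite -{2}(scale1r (rho i0 p z)) -scalerDl; congr (_ *: _); ring.
Qed.

Definition gen_span2 x :=
  exists z0 z1 z2, [/\ span2 z0, span2 z1, span2 z2 & x = z0 + E12 z1 + E13 z2].

Lemma gen_span2_subspace : subspace gen_span2.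
Proof.
have [s0 sD sZ] := span2_subspace.
split.
- by exists 0, 0, 0; rewrite !linear0 !addr0.
- move=> _ _ [x0 [x1 [x2 [s0x s1x s2x ->]]]] [y0 [y1 [y2 [s0y s1y s2y ->]]]].
  exists (x0 + y0), (x1 + y1), (x2 + y2); rewrite !linearD.
  by split; [apply: sD | apply: sD | apply: sD | rewrite addrACA [x0 + _ + _]addrACA].
- move=> k _ [x0 [x1 [x2 [s0x s1x s2x ->]]]]; exists (k *: x0), (k *: x1), (k *: x2).
  by rewrite !linearZZ !scalerDr; split; [apply: sZ | apply: sZ | apply: sZ |].
Qed.

Lemma gen_span2_span2 z : span2 z -> gen_span2 z.
Proof.
have s0 := subspace0 span2_subspace.
by move=> z_span2; exists z, 0, 0; rewrite !linear0 !addr0.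
Qed.

Lemma gen_span2_g1 p z : p != i0 -> span2 z -> gen_span2 (rho i0 p z).
Proof.
have s0 := subspace0 span2_subspace.
move=> p0 z_span2; case: (ord3P p) p0 => -> // _; [exists 0, z, 0 | exists 0, 0, z];
  by rewrite !linear0 ?addr0 ?add0r.
Qed.

Lemma gen_span2_submodule : Qop v = 0 -> submodule rho gen_span2.
Proof.
move=> Qv0; have Qv : Qop v = 0 *: v by rewrite scale0r.
have E12E13 z : span2 z -> E12 (E13 z) = 0.
  by move=> [t t_span0 ->]; have := span0_Qop Qv t_span0; rewrite scale0r.
have [s0 sD sZ] := gen_span2_subspace; split=> // i j _ [z0 [z1 [z2 [s0z s1z s2z ->]]]].
rewrite !linearD; have [pij | [-> p0] | [-> p0]] := rho_cases i j.
- rewrite (rho_comm i j i0 i1) (rho_comm i j i0 i2).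
  case: (ord3P i) pij => ->; case: (ord3P j) => -> // _; simpl_ssign;
    in_subspace gen_span2_subspace;
    by [apply: gen_span2_span2; apply: g0_span2
       | apply: gen_span2_g1 => //; apply: g0_span2 | apply: gen_span2_g1].
- case: (ord3P j) p0 => -> // _;
    rewrite ?E12_sq ?E13_sq ?E13E12 ?(E12E13 _ s1z) ?(E12E13 _ s2z) ?oppr0 !addr0;
    exact: gen_span2_g1.
- rewrite (gm1_span2 p0 s0z) add0r (rho_comm i i0 i0 i1) (rho_comm i i0 i0 i2).
  rewrite !(gm1_span2 p0) //; case: (ord3P i) p0 => -> // _; simpl_ssign;
    in_subspace gen_span2_subspace; by apply: gen_span2_span2; apply: g0_span2.
Qed.

Lemma gen_span2_notin_v : v != 0 -> ~ gen_span2 v.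
Proof.
move=> v_neq0 [z0 [z1 [z2 [s0 s1 s2 Ev]]]]; move/eqP: v_neq0; apply.
rewrite Ev -addrA; apply: (eigenvector_sum_eq0 (f := E11) (al := lam i0 - 2%:R)
  (be := lam i0 - 1) (ga := lam i0)).
- by rewrite -subr_eq0 (_ : _ - _ = - 2%:R) ?oppr_eq0 ?pnatr_eq0 //; ring.
- by rewrite -subr_eq0 (_ : _ - _ = - 1) ?oppr_eq0 ?oner_eq0 //; ring.
- by rewrite -subr_eq0 (_ : _ - _ = - 1) ?oppr_eq0 ?oner_eq0 //; ring.
- exact: E11_span2.
- by rewrite linearD !E11_g1_span2 // scalerDr.
- by rewrite addrA -Ev.
Qed.

Lemma not_simple_of_Qop_v0 : E21 (E31 v) != 0 -> Qop v = 0 -> ~ simple_module rho.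
Proof.
move=> E21E31v_neq0 Qv0 [_ simple].
have v_neq0 : v != 0 by apply: contraNneq E21E31v_neq0 => ->; rewrite !linear0.
have [all0|all] := simple _ (gen_span2_submodule Qv0).
  move/eqP: E21E31v_neq0; apply; apply: all0; apply: gen_span2_span2.
  by exists v => //; apply: span0_v.
exact: gen_span2_notin_v (all v).
Qed.

End WhittakerVector.
End Representation.

Definition Q_scalar (C : numClosedFieldType) (lam : weight C) : C :=
  - ((lam i0 + lam i1) * (lam i0 + lam i2 - 1)).

Section Model.
Variables (C : numClosedFieldType) (a : C) (lam : weight C).
Hypothesis a_neq0 : a != 0.

Local Notation W := (nat -> C -> C^o).
Let l0 := lam i0.
Let s := lam i1 + lam i2.
Let q (t : C) : C := (chi0_Omega lam - t * t - 2%:R * t) / (4%:R * a).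

Let W_addE (x y : W) n t : (x + y) n t = x n t + y n t. Proof. by []. Qed.
Let W_subE (x y : W) n t : (x - y) n t = x n t - y n t. Proof. by []. Qed.
Let W_oppE (x : W) n t : (- x) n t = - x n t. Proof. by []. Qed.
Let W_scaleE (k : C) (x : W) n t : (k *: x) n t = k * x n t. Proof. by []. Qed.
Let W_zeroE n t : (0 : W) n t = 0. Proof. by []. Qed.

(* Mtilde realized as Lambda(g_-1) (x) F, F = functions C -> C: component
   n = 0, 1, 2, 3 of x : W is the coefficient of 1, E21, E31, E21 E31, and
   components n >= 4 are unused (all operators kill them).  On F, H0 acts by
   multiplication by t and e by a times the shift t |-> t - 2; q is chosen so
   that Omega acts by b = chi0_Omega lam. *)
Definition fun_g0 (p r : nat) (g : C -> C^o) (t : C) : C :=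
  match p, r with
  | 0, 0 => l0 * g t
  | 1, 1 => (s + t) / 2%:R * g t
  | 2, 2 => (s - t) / 2%:R * g t
  | 1, 2 => a * g (t - 2%:R)
  | 2, 1 => q t * g (t + 2%:R)
  | _, _ => 0
  end.

Definition model_act (i j : nat) (x : W) : W := fun n t =>
  match i, j with
  | 0, 0 => match n with
            | 0 => l0 * x 0 t | 1 => l0 * x 1 t - x 1 t
            | 2 => l0 * x 2 t - x 2 t | 3 => l0 * x 3 t - 2%:R * x 3 t
            | _ => 0 end
  | 1, 0 => match n with 1 => x 0 t | 3 => x 2 t | _ => 0 end
  | 2, 0 => match n with 2 => x 0 t | 3 => - x 1 t | _ => 0 end
  | 0, 1 => match n with
            | 0 => fun_g0 0 0 (x 1) t + fun_g0 1 1 (x 1) t + fun_g0 2 1 (x 2) t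
            | 1 => - fun_g0 2 1 (x 3) t
            | 2 => fun_g0 0 0 (x 3) t + fun_g0 1 1 (x 3) t - x 3 t
            | _ => 0 end
  | 0, 2 => match n with
            | 0 => fun_g0 1 2 (x 1) t + fun_g0 0 0 (x 2) t + fun_g0 2 2 (x 2) t
            | 1 => x 3 t - fun_g0 0 0 (x 3) t - fun_g0 2 2 (x 3) t
            | 2 => fun_g0 1 2 (x 3) t
            | _ => 0 end
  | p, r => match n with
            | 0 => fun_g0 p r (x 0) t
            | 1 => fun_g0 p r (x 1) t + (if p == 1 then x r t else 0)
            | 2 => fun_g0 p r (x 2) t + (if p == 2 then x r t else 0)
            | 3 => fun_g0 p r (x 3) t + (if p == r then x 3 t else 0)
            | _ => 0 end
  end.

Lemma model_act_linear (i j : 'I_3) : linear (model_act i j).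
Proof.
move=> k x y; apply/funext => n; apply/funext => t.
rewrite W_addE W_scaleE /model_act /fun_g0 !W_addE !W_scaleE.
by case: i => [[|[|[|//]]] ?]; case: j => [[|[|[|//]]] ?];
  case: n => [|[|[|[|n]]]] /=; ring.
Qed.

HB.instance Definition _ (i j : 'I_3) :=
  GRing.isLinear.Build C W W *:%R (model_act i j) (model_act_linear i j).

Definition model (i j : 'I_3) : {linear W -> W} := model_act i j.

Lemma model_rep : is_rep model.
Proof.
move=> i j k l x; apply/funext => n; apply/funext => t.
rewrite !W_subE !W_scaleE.
case: i => [[|[|[|//]]] ?]; case: j => [[|[|[|//]]] ?];
case: k => [[|[|[|//]]] ?]; case: l => [[|[|[|//]]] ?];
rewrite /ssign /epar /ipar /= ?W_zeroE /model /model_act /fun_g0 /=;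
  case: n => [|[|[|[|n]]]] /=; rewrite ?subrK ?addrK ?W_zeroE; try ring.
all: rewrite /q; field.
all: by rewrite ?a_neq0.
Qed.

Definition model_gen : W := fun n _ => if n is 0 then 1 else 0.

Lemma model_gen_whittaker : whittaker_rel model lam a model_gen.
Proof.
rewrite /whittaker_rel /act_Omega /act_e /act_f /act_H0 /chi0_E11 /chi0_E22E33.
split; [| | | | split]; apply/funext => n; apply/funext => t;
  rewrite /model;
  do 4 (rewrite ?W_addE ?W_subE ?W_oppE ?W_scaleE ?W_zeroE /model_act /fun_g0 /=);
  case: n => [|[|[|[|n]]]] /=; rewrite ?subrK ?addrK ?W_zeroE; try ring.
all: rewrite /l0 /s /q; field.
all: by rewrite ?a_neq0.
Qed.

Lemma model_E21E31_neq0 : model i1 i0 (model i2 i0 model_gen) != 0.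
Proof.
apply/eqP => /(congr1 (fun x : W => x 3%N 0)).
by rewrite /model /model_act /= => /eqP; rewrite oner_eq0.
Qed.

Lemma model_Q : Qop model model_gen = Q_scalar lam *: model_gen.
Proof.
apply/funext => n; apply/funext => t.
rewrite /Qop /model /=.
do 4 (rewrite ?W_addE ?W_subE ?W_oppE ?W_scaleE ?W_zeroE /model_act /fun_g0 /=).
case: n => [|[|[|[|n]]]] /=; rewrite ?subrK ?addrK ?W_zeroE; try ring.
rewrite /Q_scalar /l0 /s /q /chi0_Omega; field.
by rewrite ?a_neq0.
Qed.

End Model.

Lemma atypical_iff (C : numClosedFieldType) (lam : weight C) :
  atypical lam <-> Q_scalar lam = 0.
Proof.
rewrite /Q_scalar; split.
  move=> [_ [[i [j [pij ->]]] H]]; apply/eqP; rewrite oppr_eq0 mulf_eq0; apply/orP.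
  move: H; rewrite /wform /rho_w /wadd /wsub /eps.
  case: (ord3P i) pij => ->; case: (ord3P j) => -> //= _ H;
    [left | right | left; rewrite -oppr_eq0 | right; rewrite -oppr_eq0];
    by apply/eqP; rewrite -{}H; ring.
move/eqP; rewrite oppr_eq0 mulf_eq0 => /orP[] /eqP H.
  exists (wsub (eps C i0) (eps C i1)); split; first by exists i0, i1.
  by rewrite -{}H /wform /rho_w /wadd /wsub /eps /=; ring.
exists (wsub (eps C i0) (eps C i2)); split; first by exists i0, i2.
by rewrite -{}H /wform /rho_w /wadd /wsub /eps /=; ring.
Qed.

Lemma chi0_Omega_z_iff (C : numClosedFieldType) (lam : weight C) :
  chi0_Omega lam = 4%:R * (chi0_z lam ^+ 2 - chi0_z lam) <-> Q_scalar lam = 0.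
Proof.
have -> : chi0_Omega lam = 4%:R * (chi0_z lam ^+ 2 - chi0_z lam) + 4%:R * Q_scalar lam.
  by rewrite /chi0_Omega /chi0_z /Q_scalar; field; rewrite ?pnatr_eq0.
rewrite -[X in _ + _ = X]addr0; split => [/addrI/eqP|->]; last by rewrite mulr0.
by rewrite mulf_eq0 pnatr_eq0 => /eqP.
Qed.

Lemma Mtilde_E21E31v_neq0 (C : numClosedFieldType) (a : C) (lam : weight C)
  (V : lmodType C) (rho : 'I_3 -> 'I_3 -> {linear V -> V}) (v : V) :
  a != 0 -> is_Mtilde rho lam a v -> rho i1 i0 (rho i2 i0 v) != 0.
Proof.
move=> a_neq0 [_ _ _ univ].
have [phi [phi_v phi_rho]] :=
  univ _ _ _ (model_rep lam a_neq0) (model_gen_whittaker lam a_neq0).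
apply: contraNneq (model_E21E31_neq0 a lam) => E21E31v0.
by rewrite -phi_v -!phi_rho E21E31v0 linear0.
Qed.

Lemma Mtilde_Qop_v (C : numClosedFieldType) (a : C) (lam : weight C)
  (V : lmodType C) (rho : 'I_3 -> 'I_3 -> {linear V -> V}) (v : V) :
  a != 0 -> is_Mtilde rho lam a v -> Qop rho v = Q_scalar lam *: v.
Proof.
move=> a_neq0 [rep whv _ univ]; have e_v : act_e rho v = a *: v by case: whv.
have [phi [phi_v phi_rho]] :=
  univ _ _ _ (model_rep lam a_neq0) (model_gen_whittaker lam a_neq0).
have gen_neq0 : model_gen (C:=C) != 0.
  by apply: contraNneq (model_E21E31_neq0 a lam) => ->; rewrite !linear0.
have [c Qv] := Qop_v_scalar rep a_neq0 e_v whv.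
have phi_Q : phi (Qop rho v) = Qop (model a lam) (phi v) by rewrite /Qop /= !phi_rho.
have : c *: model_gen (C:=C) = Q_scalar lam *: model_gen (C:=C).
  by rewrite -(model_Q lam a_neq0) -phi_v -phi_Q Qv linearZZ.
move/eqP; rewrite -subr_eq0 -scalerBl scaler_eq0 (negbTE gen_neq0) orbF subr_eq0.
by move/eqP <-.
Qed.

Theorem lemma20 (C : numClosedFieldType) (a : C) (lam : weight C)
  (V : lmodType C) (rho : 'I_3 -> 'I_3 -> {linear V -> V}) (v : V) :
  a != 0 ->
  is_Mtilde rho lam a v ->
  let b := chi0_Omega lam in
  let c := chi0_z lam in
  [<-> atypical lam; b = 4%:R * (c ^+ 2 - c); ~ simple_module rho].
Proof.
move=> a_neq0 Mt b c; have E21E31v_neq0 := Mtilde_E21E31v_neq0 a_neq0 Mt.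
have Qv := Mtilde_Qop_v a_neq0 Mt.
case: Mt => rep whv gen _; have e_v : act_e rho v = a *: v by case: whv.
have v_neq0 : v != 0 by apply: contraNneq E21E31v_neq0 => ->; rewrite !linear0.
tfae=> [/atypical_iff Q0 | /chi0_Omega_z_iff Q0 | not_simple].
- exact/chi0_Omega_z_iff.
- by apply: (not_simple_of_Qop_v0 rep a_neq0 e_v whv E21E31v_neq0); rewrite Qv Q0 scale0r.
- apply/atypical_iff; apply: contra_notP not_simple => /eqP Q_neq0.
  exact: (simple_of_Qop_v rep a_neq0 e_v whv gen v_neq0 Qv Q_neq0).
Qed.
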